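(* Let $M$ be a Kripke model with yesterday and $U$ an action model over $L_{\mathsf{DETL}}$, and suppose $M,w^*\models\mathrm{pre}^U(s^* )$ for some $w^*\in W^M$ and $s^*\in W^U$ (so $M[U]$ is a Kripke model). Then: (a) If $M$ satisfies persistence of facts, then so does $M[U]$. (b) If $M$ and $U$ are depth-defined, then so is $M[U]$. (c) If $M$ and $U$ satisfy knowledge of the past and $U$ is history preserving, then $M[U]$ satisfies knowledge of the past. (d) If $M$ satisfies knowledge of the initial time and $U$ is history preserving, then $M[U]$ satisfies knowledge of the initial time. (e) If $M$ and $U$ satisfy uniqueness of the past, then so does $M[U]$. (f) If $M$ and $U$ satisfy perfect recall and $U$ is history preserving, then $M[U]$ satisfies perfect recall. (g) If $M$ and $U$ are synchronous and $U$ is history preserving, then $M[U]$ is synchronous.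
   Context: Fix a nonempty finite set $\mathsf{Agt}$ of agents and a nonempty set $\mathsf{Prop}$ of letters. A Kripke model (with yesterday) is $M=(W^M,(\to^M_a)_{a\in\mathsf{Agt}},\leadsto^M,V^M)$ with $W^M$ a nonempty set, binary relations $\to^M_a,\leadsto^M$ on $W^M$ ($w'\leadsto w$: $w'$ is a yesterday of $w$), $V^M:\mathsf{Prop}\to\mathcal P(W^M)$. An action model over a set $F$ of formulas is $U=(W^U,(\to^U_a)_a,\leadsto^U,\mathrm{pre}^U)$ with $W^U$ nonempty finite, binary relations $\to^U_a,\leadsto^U$, and $\mathrm{pre}^U:W^U\to F$. An event $s$ is a past state if there is no $s'\leadsto^Us$. $L_{\mathsf{DETL}}$ (with action models over it) is given by $\varphi::=p\mid\neg\varphi\mid\varphi\wedge\varphi\mid\Box_a\varphi\mid[Y]\varphi\mid[U,s]\varphi$. Semantics: Boolean standard; $M,w\models\Box_a\varphi$ iff $\varphi$ holds at all $v$ with $w\to^M_av$; $M,w\models[Y]\varphi$ iff $\varphi$ holds at all $v\leadsto^Mw$; $M,w\models[U,s]\varphi$ iff $M,w\models\mathrm{pre}^U(s)$ implies $M[U],(w,s)\models\varphi$. The product $M[U]$ has worlds $\{(v,t)\in W^M\times W^U:M,v\models\mathrm{pre}^U(t)\}$, $(v,t)\to_a(v',t')$ iff $v\to^M_av'$ and $t\to^U_at'$, $(v',t')\leadsto(v,t)$ iff ($v'\leadsto^Mv$, $t'=t$, $t$ a past state) or ($v'=v$, $t'\leadsto^Ut$), and $(v,t)\in V(p)$ iff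 $v\in V^M(p)$. $\models\varphi$ means truth at all pointed Kripke models. A progression is a finite nonempty sequence $x_0,\dots,x_n$ with $x_i\leadsto x_{i+1}$, of length $n$; a history is a progression that cannot be extended by adding elements at the beginning. $\mathrm{depth}(x)$ is the maximum length of a history ending at $x$ if the maximum exists, else $\infty$. The following apply to Kripke models or action models (with worlds/events $w,v,\dots$), except where noted: Persistence of facts (Kripke models only): $w\leadsto w'$ implies ($w\in V(p)\iff w'\in V(p)$) for all $p$. Depth-definedness: $\mathrm{depth}(w)\ne\infty$ for all $w$. Knowledge of the past: $w'\leadsto w\to_a v$ implies there is $v'$ with $v'\leadsto v$. Knowledge of the initial time: if $w\to_av$ and there is no $w'\leadsto w$ then there is no $v'\leadsto v$. Uniqueness of the past: $w'\leadsto w$ and $w''\leadsto w$ imply $w'=w''$. Perfect recall: $w\leadsto v\to_a v'$ implies there is $w'$ with $w\to_aw'\leadsto v'$. Synchronicity: the structure is depth-defined and $w\to_aw'$ implies $\mathrm{depth}(w)=\mathrm{depth}(w')$. An epistemic past state of $U$ is a past state $s$ with $\models\mathrm{pre}^U(s)$ whose only outgoing epistemic arrows are the reflexive arrows $s\to^U_as$ for each $a\in\mathsf{Agt}$. History preservation (action models only): $s'\leadsto^Us$ implies $\models\mathrm{pre}^U(s)\to\mathrm{pre}^U(s')$, and every past state of $U$ is an epistemic past state. *)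

From mathcomp Require Import all_boot.
Unset Printing Implicit Defensive.

Section Logic.
Context {Agt : finType}.
Context {Letter : Type}.

(* An action model over formulas is given inline by
   its number of events n.+1 (events = 'I_n.+1, nonempty finite), its
   epistemic relations, its yesterday relation and its precondition map;
   ActBox n ra ry pre s phi is [U,s]phi. *)
Inductive form : Type :=
| Atom of Letter
| Neg of form
| And of form & form
| Box of Agt & form
| Yest of form
| ActBox (n : nat) (ra : Agt -> 'I_n.+1 -> 'I_n.+1 -> bool)
         (ry : 'I_n.+1 -> 'I_n.+1 -> bool) (pre : 'I_n.+1 -> form)
         (s : 'I_n.+1) (phi : form).

Definition Imp (phi psi : form) : form := Neg (And phi (Neg psi)).

(* Kripke models with yesterday; yest w' w means w' ~> w (w' is a yesterday of w). *)
Record kripke := Kripke {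
  world : Type;
  krel  : Agt -> world -> world -> Prop;
  kyest : world -> world -> Prop;
  kval  : Letter -> world -> Prop }.

Definition past_ev (n : nat) (ry : 'I_n.+1 -> 'I_n.+1 -> bool) (t : 'I_n.+1) : Prop :=
  forall t', ~~ ry t' t.

(* Product M[U], where ok v t stands for M,v |= pre(t). *)
Definition prod_model (M : kripke) n (ra : Agt -> 'I_n.+1 -> 'I_n.+1 -> bool)
  (ry : 'I_n.+1 -> 'I_n.+1 -> bool) (ok : world M -> 'I_n.+1 -> Prop) : kripke :=
  @Kripke {x : world M * 'I_n.+1 | ok x.1 x.2}
    (fun a x y => krel M a (sval x).1 (sval y).1 /\ ra a (sval x).2 (sval y).2)
    (fun x' x => (kyest M (sval x').1 (sval x).1 /\ (sval x').2 = (sval x).2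
                   /\ past_ev n ry (sval x).2)
              \/ ((sval x').1 = (sval x).1 /\ ry (sval x').2 (sval x).2))
    (fun p x => kval M p (sval x).1).

Fixpoint sat (M : kripke) (w : world M) (phi : form) {struct phi} : Prop :=
  match phi with
  | Atom p => kval M p w
  | Neg psi => ~ sat M w psi
  | And psi chi => sat M w psi /\ sat M w chi
  | Box a psi => forall v, krel M a w v -> sat M v psi
  | Yest psi => forall v, kyest M v w -> sat M v psi
  | ActBox n ra ry pre s psi =>
      forall h : sat M w (pre s),
        sat (prod_model M n ra ry (fun v t => sat M v (pre t)))
            (exist (fun x : world M * 'I_n.+1 => sat M x.1 (pre x.2)) (w, s) h) psi
  end.

Definition valid (phi : form) : Prop := forall (M : kripke) (w : world M), sat M w phi.

Record actmodel := ActModel {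
  asz   : nat;
  arel  : Agt -> 'I_asz.+1 -> 'I_asz.+1 -> bool;
  ayest : 'I_asz.+1 -> 'I_asz.+1 -> bool;
  apre  : 'I_asz.+1 -> form }.

Definition product (M : kripke) (U : actmodel) : kripke :=
  prod_model M (asz U) (arel U) (ayest U) (fun v t => sat M v (apre U t)).

Section Props.
Context {T : Type}.
Variable R : Agt -> T -> T -> Prop.
Variable Y : T -> T -> Prop.

Definition history_len (x : T) (n : nat) : Prop :=
  exists f : nat -> T, f n = x /\ (forall i, i < n -> Y (f i) (f i.+1))
                       /\ ~ (exists y, Y y (f 0)).

Definition depth_is (x : T) (d : nat) : Prop :=
  history_len x d /\ forall n, history_len x n -> n <= d.

Definition persistence (V : Letter -> T -> Prop) : Prop :=
  forall w w' p, Y w w' -> (V p w <-> V p w').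

Definition depth_defined : Prop := forall x, exists d, depth_is x d.

Definition know_past : Prop :=
  forall a w' w v, Y w' w -> R a w v -> exists v', Y v' v.

Definition know_init : Prop :=
  forall a w v, R a w v -> (forall w', ~ Y w' w) -> forall v', ~ Y v' v.

Definition unique_past : Prop :=
  forall w w' w'', Y w' w -> Y w'' w -> w' = w''.

Definition perfect_recall : Prop :=
  forall a w v v', Y w v -> R a v v' -> exists w', R a w w' /\ Y w' v'.

Definition synchronous : Prop :=
  depth_defined /\
  forall a w w' d d', R a w w' -> depth_is w d -> depth_is w' d' -> d = d'.
End Props.

Definition KR (M : kripke) := krel M.
Definition KY (M : kripke) := kyest M.
Definition AR (U : actmodel) : Agt -> 'I_(asz U).+1 -> 'I_(asz U).+1 -> Prop :=
  fun a s t => arel U a s t.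
Definition AY (U : actmodel) : 'I_(asz U).+1 -> 'I_(asz U).+1 -> Prop :=
  fun s t => ayest U s t.

Definition past_state (U : actmodel) (s : 'I_(asz U).+1) : Prop :=
  forall s', ~ AY U s' s.

Definition epistemic_past_state (U : actmodel) (s : 'I_(asz U).+1) : Prop :=
  past_state U s /\ valid (apre U s) /\
  (forall a t, AR U a s t <-> t = s).

Definition history_preserving (U : actmodel) : Prop :=
  (forall s s', AY U s' s -> valid (Imp (apre U s) (apre U s'))) /\
  (forall s, past_state U s -> epistemic_past_state U s).

End Logic.

Arguments form : clear implicits.
Arguments kripke : clear implicits.
Arguments actmodel : clear implicits.

From mathcomp Require Import all_boot zify.
From Stdlib Require Import Classical ProofIrrelevance.
Set Implicit Arguments.
Unset Strict Implicit.
Unset Printing Implicit Defensive.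

(* A yesterday step of M[U] either moves along M at a fixed past event or
   along U at a fixed world.  Hence persistence and uniqueness of the past
   transfer componentwise.  History preservation makes a past event behave
   like the identity event (always executable, epistemically related only to
   itself) and makes preconditions propagate backwards along U's yesterday
   relation, so the witnesses built in M or in U are worlds of M[U]; this gives
   knowledge of the past and of the initial time and perfect recall.  Finally
   depth(v, t) = depth(v) + depth(t): every step of M[U] raises one of the two
   component depths, and a maximal history of (v, t) runs through a maximal
   history of v at the initial event of a maximal history of t, and then
   through that history of t at v. *)

Section Depth.
Context {T : Type} (Y : T -> T -> Prop).

Definition progression (a b : T) (m : nat) : Prop :=
  exists g : nat -> T, g 0 = a /\ g m = b /\ forall i, i < m -> Y (g i) (g i.+1).

Lemma history_len_cat b c n m :
  history_len Y b n -> progression b c m -> history_len Y c (n + m).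
Proof.
move=> [f [fn [fs fr]]] [g [g0 [gm gs]]].
pose F i := if i <= n then f i else g (i - n).
have F_ge i : n <= i -> F i = g (i - n).
  rewrite /F; case: ifP => // i_le_n n_le_i.
  have -> : i = n by lia.
  by rewrite subnn fn g0.
exists F; split; last split.
- by rewrite F_ge ?leq_addr // addKn.
- move=> i lt_i; case: (ltnP i n) => [lt_in | le_ni].
  + by rewrite /F ifT ?ifT //; [exact: fs | lia].
  + rewrite !F_ge //; last lia.
    have -> : i.+1 - n = (i - n).+1 by lia.
    apply: gs; lia.
- by rewrite /F leq0n.
Qed.

Lemma history_len_yest x z n : history_len Y x n -> Y x z -> history_len Y z n.+1.
Proof.
move=> hx yxz; rewrite -addn1; apply: history_len_cat hx _.
by exists (fun i => if i == 0 then x else z); do 2!split => //; case.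
Qed.

Lemma depth_is_unique x d d' : depth_is Y x d -> depth_is Y x d' -> d = d'.
Proof. by move=> [h1 b1] [h2 b2]; have := b1 _ h2; have := b2 _ h1; lia. Qed.

Lemma depth_is_yest_lt x z d d' :
  depth_is Y x d -> depth_is Y z d' -> Y x z -> d < d'.
Proof. by move=> [hx _] [_ bz] yxz; exact: bz _ (history_len_yest hx yxz). Qed.

Lemma exists_max_bounded (P : nat -> Prop) B :
  P 0 -> (forall m, P m -> m <= B) -> exists n, P n /\ forall m, P m -> m <= n.
Proof.
elim: B => [|B IH] P0 bounded; first by exists 0; split => // m /bounded.
have [PB1 | notPB1] := classic (P B.+1); first by exists B.+1.
apply: IH => // m Pm; have := bounded _ Pm.
have : m <> B.+1 by move=> e; subst.
lia.
Qed.

Lemma depth_is_of_progression_bound x B :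
  (forall a n, progression a x n -> n <= B) -> exists d, depth_is Y x d.
Proof.
move=> bounded.
pose P n := exists f : nat -> T, f n = x /\ forall i, i < n -> Y (f i) (f i.+1).
have P0 : P 0 by exists (fun _ => x).
have PB m : P m -> m <= B by move=> [f [fm fs]]; apply: (bounded (f 0)); exists f.
have [n [[f [fn fs]] maxn]] := exists_max_bounded P0 PB.
exists n; split.
- exists f; do 2!split => //; move=> [y yf0].
  suff : n.+1 <= n by rewrite ltnn.
  apply: maxn; exists (fun i => if i == 0 then y else f i.-1); split => //.
  by move=> [|i] lt_i //=; apply: fs.
- by move=> m [g [gm [gs _]]]; apply: maxn; exists g.
Qed.

End Depth.

Section Product.
Context {Agt : finType} {Letter : Type} (M : kripke Agt Letter) (U : actmodel Agt Letter).
Notation MU := (product M U).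
Notation pre := (apre U).

Definition product_world v t (h : sat M v (pre t)) : world MU := exist _ (v, t) h.

Lemma past_stateE s : past_state U s <-> past_ev (asz U) (ayest U) s.
Proof.
split=> [h t | h t yts]; first by apply/negP; apply: h.
by have := h t; rewrite yts.
Qed.

Section HistoryPreserving.
Hypothesis hp : history_preserving U.

Lemma sat_pre_yest v t t' : sat M v (pre t) -> AY U t' t -> sat M v (pre t').
Proof. by move=> vt yt; apply: NNPP => nt'; exact: hp.1 _ _ yt M v (conj vt nt'). Qed.

Lemma sat_pre_past s : past_state U s -> forall v, sat M v (pre s).
Proof. by move=> /hp.2 [_ []]. Qed.

Lemma arel_past s : past_state U s -> forall a t, AR U a s t <-> t = s.
Proof. by move=> /hp.2 [_ []]. Qed.

Lemma sat_pre_along (f : nat -> 'I_(asz U).+1) m v :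
  (forall i, i < m -> AY U (f i) (f i.+1)) -> sat M v (pre (f m)) ->
  forall i, i <= m -> sat M v (pre (f i)).
Proof.
move=> fs vfm.
have down j : j <= m -> sat M v (pre (f (m - j))).
  elim: j => [|j IH] le_jm; first by rewrite subn0.
  apply: sat_pre_yest (IH (ltnW le_jm)) _.
  have -> : m - j = (m - j.+1).+1 by lia.
  apply: fs; lia.
by move=> i le_im; have := down (m - i) (leq_subr _ _); rewrite subKn.
Qed.

Lemma product_progression_events v s t m (Hs : sat M v (pre s)) (Ht : sat M v (pre t)) :
  progression (AY U) s t m ->
  progression (KY MU) (product_world Hs) (product_world Ht) m.
Proof.
move=> [f [f0 [fm fs]]].
have vfm : sat M v (pre (f m)) by rewrite fm.
have vf := sat_pre_along fs vfm.
exists (fun i => product_world (vf _ (geq_minr i m))); split; last split.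
- by apply: subset_eq_compat; rewrite min0n f0.
- by apply: subset_eq_compat; rewrite minnn fm.
- move=> i lt_im; right => /=; split => //.
  have -> : minn i m = i by lia.
  have -> : minn i.+1 m = i.+1 by lia.
  exact: fs.
Qed.

Lemma product_history_past v s (ps : past_state U s) dm :
  history_len (KY M) v dm -> history_len (KY MU) (product_world (sat_pre_past ps v)) dm.
Proof.
move=> [h [hdm [hs hr]]].
exists (fun i => product_world (sat_pre_past ps (h i))); split; last split.
- by apply: subset_eq_compat; rewrite hdm.
- by move=> i lt_i; left; split; [exact: hs | split => //; apply/past_stateE].
- move=> [y [[yh _] | [_ ys]]]; [by apply: hr; exists (sval y).1 | exact: ps ys].
Qed.

End HistoryPreserving.

Lemma product_yest_depth_lt x y dm du dm' du' :
  KY MU x y ->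
  depth_is (KY M) (sval x).1 dm -> depth_is (AY U) (sval x).2 du ->
  depth_is (KY M) (sval y).1 dm' -> depth_is (AY U) (sval y).2 du' ->
  dm + du < dm' + du'.
Proof.
move=> [[yw [et _]] | [ew yt]] hm hu hm' hu'.
- have := depth_is_yest_lt hm hm' yw.
  rewrite et in hu; have := depth_is_unique hu hu'; lia.
- have := depth_is_yest_lt hu hu' yt.
  rewrite ew in hm; have := depth_is_unique hm hm'; lia.
Qed.

Section DepthDefined.
Hypotheses (ddM : depth_defined (KY M)) (ddU : depth_defined (AY U)).

Lemma product_progression_le a x n dm du :
  progression (KY MU) a x n ->
  depth_is (KY M) (sval x).1 dm -> depth_is (AY U) (sval x).2 du -> n <= dm + du.
Proof.
move=> [g [_ [<- gs]]]; elim: n dm du gs => [|n IH] dm du gs hm hu //.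
have [dmn hmn] := ddM (sval (g n)).1; have [dun hun] := ddU (sval (g n)).2.
have := IH _ _ (fun i lt_in => gs i (ltnW lt_in)) hmn hun.
have := product_yest_depth_lt (gs n (ltnSn n)) hmn hun hm hu.
lia.
Qed.

Lemma product_depth_defined : depth_defined (KY MU).
Proof.
move=> x; have [dm hm] := ddM (sval x).1; have [du hu] := ddU (sval x).2.
apply: (depth_is_of_progression_bound (B := dm + du)) => a n pax.
exact: product_progression_le pax hm hu.
Qed.

Lemma product_depth_is (hp : history_preserving U) x dm du :
  depth_is (KY M) (sval x).1 dm -> depth_is (AY U) (sval x).2 du ->
  depth_is (KY MU) x (dm + du).
Proof.
case: x => [[v t] Ht] /= hm hu; split; last first.
  move=> n [g [gn [gs _]]].
  have pg : progression (KY MU) (g 0) (exist _ (v, t) Ht) n by exists g.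
  exact: product_progression_le pg hm hu.
case: hu => [[f [fdu [fs fr]]] _].
have ps : past_state U (f 0) by move=> s' ys'; apply: fr; exists s'.
apply: history_len_cat (product_history_past hp ps hm.1) _.
by apply: (product_progression_events hp); exists f.
Qed.

End DepthDefined.

Lemma product_persistence : persistence (KY M) (kval M) -> persistence (KY MU) (kval MU).
Proof. by move=> pM [[w s] H] [[w' s'] H'] p /= [[yw _] | [-> _]]; first exact: pM. Qed.

Lemma product_unique_past : unique_past (KY M) -> unique_past (AY U) -> unique_past (KY MU).
Proof.
move=> uM uU [[w s] H] [[w1 s1] H1] [[w2 s2] H2] /= y1 y2; apply: subset_eq_compat.
case: y1 y2 => [[yw1 [-> ps1]] | [-> yt1]] [[yw2 [-> ps2]] | [-> yt2]].
- by rewrite (uM _ _ _ yw1 yw2).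
- by have := ps1 s2; rewrite yt2.
- by have := ps2 s1; rewrite yt1.
- by rewrite (uU _ _ _ yt1 yt2).
Qed.

Section Epistemic.
Hypothesis hp : history_preserving U.

Lemma product_know_past :
  know_past (KR M) (KY M) -> know_past (AR U) (AY U) -> know_past (KR MU) (KY MU).
Proof.
move=> kM kU a [[w1 s1] H1] [[w s] H] [[v t] Hv] /= [[yw [_ ps]] | [_ ys]] [rw rs].
- move/past_stateE: ps => ps; move/(arel_past hp ps): rs => ets; subst t.
  have [v' yv'] := kM a _ _ _ yw rw.
  exists (product_world (sat_pre_past hp ps v')).
  by left; do 2!split => //; apply/past_stateE.
- have [t' yt'] := kU a _ _ _ ys rs.
  by exists (product_world (sat_pre_yest hp Hv yt')); right.
Qed.

Lemma product_know_init : know_init (KR M) (KY M) -> know_init (KR MU) (KY MU).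
Proof.
move=> kM a [[w s] H] [[v t] Hv] /= [rw rs] no_yest [[v1 t1] H1] /= yv.
have ps : past_state U s.
  by move=> s' ys; apply: (no_yest (product_world (sat_pre_yest hp H ys))); right.
move/(arel_past hp ps): rs => ets; subst t.
have no_yest_w w' : ~ KY M w' w.
  move=> yw; apply: (no_yest (product_world (sat_pre_past hp ps w'))).
  by left; do 2!split => //; apply/past_stateE.
by case: yv => [[yw _] | [_ ys]]; [exact: kM a _ _ rw no_yest_w _ yw | exact: ps _ ys].
Qed.

Lemma product_perfect_recall :
  perfect_recall (KR M) (KY M) -> perfect_recall (AR U) (AY U) ->
  perfect_recall (KR MU) (KY MU).
Proof.
move=> pM pU a [[w s] H] [[v t] Hv] [[v2 t2] H2] /= [[yw [<- ps]] | [<- ys]] [rv rt].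
- move/past_stateE: ps => ps; move/(arel_past hp ps): rt => ett; subst t2.
  have [w2 [rw2 yw2]] := pM a _ _ _ yw rv.
  exists (product_world (sat_pre_past hp ps w2)); split.
    by split => //=; apply/(arel_past hp ps).
  by left; do 2!split => //; apply/past_stateE.
- have [s2 [rs2 ys2]] := pU a _ _ _ ys rt.
  by exists (product_world (sat_pre_yest hp H2 ys2)); split => //; right.
Qed.

Lemma product_synchronous :
  synchronous (KR M) (KY M) -> synchronous (AR U) (AY U) -> synchronous (KR MU) (KY MU).
Proof.
move=> [ddM sM] [ddU sU]; split; first exact: product_depth_defined.
move=> a x y d d' [rw rs] hx hy.
have [dm hm] := ddM (sval x).1; have [du hu] := ddU (sval x).2.
have [dm' hm'] := ddM (sval y).1; have [du' hu'] := ddU (sval y).2.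
rewrite -(depth_is_unique (product_depth_is ddM ddU hp hm hu) hx).
rewrite -(depth_is_unique (product_depth_is ddM ddU hp hm' hu') hy).
by rewrite (sM _ _ _ _ _ rw hm hm') (sU _ _ _ _ _ rs hu hu').
Qed.

End Epistemic.

End Product.

Theorem theorem19 (Agt : finType) (Letter : Type) (a0 : Agt) (p0 : Letter)
  (M : kripke Agt Letter) (U : actmodel Agt Letter)
  (wst : world M) (sst : 'I_(asz U).+1)
  (Hpre : sat M wst (apre U sst)) :
  let MU := product M U in
  (* (a) *)
  (persistence (KY M) (kval M) -> persistence (KY MU) (kval MU)) /\
  (* (b) *)
  (depth_defined (KY M) -> depth_defined (AY U) -> depth_defined (KY MU)) /\
  (* (c) *)
  (know_past (KR M) (KY M) -> know_past (AR U) (AY U) -> history_preserving U ->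
     know_past (KR MU) (KY MU)) /\
  (* (d) *)
  (know_init (KR M) (KY M) -> history_preserving U -> know_init (KR MU) (KY MU)) /\
  (* (e) *)
  (unique_past (KY M) -> unique_past (AY U) -> unique_past (KY MU)) /\
  (* (f) *)
  (perfect_recall (KR M) (KY M) -> perfect_recall (AR U) (AY U) ->
     history_preserving U -> perfect_recall (KR MU) (KY MU)) /\
  (* (g) *)
  (synchronous (KR M) (KY M) -> synchronous (AR U) (AY U) ->
     history_preserving U -> synchronous (KR MU) (KY MU)).
Proof.
move=> MU; split; first exact: product_persistence.
split; first exact: product_depth_defined.
split; first by move=> kM kU hp; exact: product_know_past.
split; first by move=> kM hp; exact: product_know_init.
split; first exact: product_unique_past.
split; first by move=> pM pU hp; exact: product_perfect_recall.
by move=> sM sU hp; exact: product_synchronous.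
Qed.
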